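(* In the setting described in the context, let $w\in\mathbb{Z}^{n-1}_{\ge0}$ and $z\in M$, and assume that $R_w$ contains two coprime monomials. Then $\dim_{\mathbb{K}}R_{w+z}=\dim_{\mathbb{K}}R_w+\dim_{\mathbb{K}}R_z-1$.
   Context: Let $\mathbb{K}$ be a field. A Newton polyhedron is the convex hull of $S+\mathbb{R}^n_{\ge0}$ for a nonempty finite $S\subset\mathbb{Z}^n_{\ge0}$; for $\xi\in\mathbb{R}^n_{\ge0}$ the face $\Delta^\xi=\{a\in\Delta:\langle\xi,a\rangle=\min_{b\in\Delta}\langle\xi,b\rangle\}$ is compact iff $\xi\in\mathbb{R}^n_{>0}$; a loose edge is a compact 1-dimensional face not contained in any compact face of dimension $\ge2$. Let $\Delta$ be a Newton polyhedron with a loose edge $E$, let $c\in\mathbb{Z}^n$ be a primitive lattice vector parallel to $E$, and let $\xi_1,\dots,\xi_{n-1}\in\mathbb{Z}^n_{\ge0}$ be linearly independent vectors with $\langle\xi_i,c\rangle=0$. For $\alpha\in\mathbb{Z}^n$ put $\omega(\underline x^\alpha)=(\langle\xi_1,\alpha\rangle,\dots,\langle\xi_{n-1},\alpha\rangle)$ (the weight). For $w\in\mathbb{Z}^{n-1}_{\ge0}$ let $R_w\subset\mathbb{K}[x_1,\dots,x_n]$ be the $\mathbb{K}$-span of the monomials $\underline x^\alpha$, $\alpha\in\mathbb{Z}^n_{\ge0}$, with $\omega(\underline x^\alpha)=w$ (so $\mathbb{K}[x_1,\dots,x_n]=\bigoplus_w R_w$ is graded and each $R_w$ is finite-dimensional).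 Let $M$ be the set of $z\in\mathbb{Z}^{n-1}_{\ge0}$ for which there is $\alpha\in\mathbb{Z}^n$ with $\omega(\underline x^\alpha)=z$ and $\langle\xi,\alpha\rangle\ge0$ for all $\xi\in\mathbb{R}^n_{\ge0}$ orthogonal to $E$ (i.e. to $c$). *)

From HB Require Import structures.
From mathcomp Require Import all_boot all_order all_algebra.
From mathcomp Require Import reals.
From mathcomp Require Import mpoly.

Set Implicit Arguments.
Unset Strict Implicit.
Unset Printing Implicit Defensive.

Import Order.TTheory GRing.Theory Num.Theory.
Local Open Scope ring_scope.

Definition dotR (R : realType) (n : nat) (u v : 'I_n -> R) : R :=
  \sum_(i < n) u i * v i.

Definition minkowski_orthant (R : realType) (n m : nat)
    (s : 'I_m.+1 -> 'I_n -> nat) : ('I_n -> R) -> Prop :=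
  fun a => exists k : 'I_m.+1, forall i, ((s k i)%:R : R) <= a i.

Definition conv_hull (R : realType) (n : nat) (A : ('I_n -> R) -> Prop) :
    ('I_n -> R) -> Prop :=
  fun a => exists (k : nat) (p : 'I_k -> 'I_n -> R) (l : 'I_k -> R),
    [/\ forall j, A (p j),
        forall j, 0 <= l j,
        \sum_(j < k) l j = 1
      & forall i, a i = \sum_(j < k) l j * p j i].

(* Delta is a Newton polyhedron: Delta = conv(S + R^n_{>=0}) for a nonempty
   finite S subset of Z^n_{>=0} (S enumerated as s_0, ..., s_m). *)
Definition is_newton_polyhedron (R : realType) (n : nat)
    (Delta : ('I_n -> R) -> Prop) : Prop :=
  exists (m : nat) (s : 'I_m.+1 -> 'I_n -> nat),
    forall a, Delta a <-> conv_hull (@minkowski_orthant R n m s) a.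

Definition face (R : realType) (n : nat) (Delta : ('I_n -> R) -> Prop)
    (xi : 'I_n -> R) : ('I_n -> R) -> Prop :=
  fun a => Delta a /\ forall b, Delta b -> dotR xi a <= dotR xi b.

(* compact faces: the faces Delta^xi with xi in R^n_{>0}
   (the context states Delta^xi, xi in R^n_{>=0}, is compact iff xi in R^n_{>0}) *)
Definition compact_face (R : realType) (n : nat) (Delta : ('I_n -> R) -> Prop)
    (F : ('I_n -> R) -> Prop) : Prop :=
  exists xi : 'I_n -> R, (forall i, 0 < xi i) /\ forall a, F a <-> face Delta xi a.

Definition aff_indep_in (R : realType) (n : nat) (F : ('I_n -> R) -> Prop)
    (k : nat) : Prop :=
  exists (p0 : 'I_n -> R) (p : 'I_k -> 'I_n -> R),
    [/\ F p0, forall j, F (p j)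
      & forall cf : 'I_k -> R,
          (forall i, \sum_(j < k) cf j * (p j i - p0 i) = 0) -> forall j, cf j = 0].

Definition aff_dim (R : realType) (n : nat) (F : ('I_n -> R) -> Prop) (d : nat) : Prop :=
  aff_indep_in F d /\ ~ aff_indep_in F d.+1.

Definition loose_edge (R : realType) (n : nat) (Delta : ('I_n -> R) -> Prop)
    (E : ('I_n -> R) -> Prop) : Prop :=
  [/\ compact_face Delta E, aff_dim E 1
    & forall F, compact_face Delta F -> (forall a, E a -> F a) -> ~ aff_indep_in F 2].

Definition primitive (n : nat) (c : 'I_n -> int) : Prop :=
  forall d : int, (forall i, (d %| c i)%Z) -> `|d| = 1.

Definition parallel_to (R : realType) (n : nat) (c : 'I_n -> int)
    (E : ('I_n -> R) -> Prop) : Prop :=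
  exists a b : 'I_n -> R, [/\ E a, E b, a <> b
    & exists t : R, forall i, b i - a i = t * (c i)%:~R].

Definition lin_indep_family (R : realType) (n k : nat) (xi : 'I_k -> 'I_n -> nat) : Prop :=
  forall cf : 'I_k -> R,
    (forall j, \sum_(i < k) cf i * (xi i j)%:R = 0) -> forall i, cf i = 0.

Definition in_M (R : realType) (n : nat) (xi : 'I_n.-1 -> 'I_n -> nat)
    (c : 'I_n -> int) (z : 'I_n.-1 -> nat) : Prop :=
  exists alpha : 'I_n -> int,
    (forall i, \sum_(j < n) (xi i j)%:Z * alpha j = (z i)%:Z) /\
    forall v : 'I_n -> R, (forall i, 0 <= v i) ->
      \sum_(j < n) v j * (c j)%:~R = 0 ->
      0 <= \sum_(j < n) v j * (alpha j)%:~R.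

Definition has_weight (n : nat) (xi : 'I_n.-1 -> 'I_n -> nat) (m : 'X_{1..n})
    (w : 'I_n.-1 -> nat) : Prop :=
  forall i, (\sum_(j < n) xi i j * m j)%N = w i.

Definition Rw (K : fieldType) (n : nat) (xi : 'I_n.-1 -> 'I_n -> nat)
    (w : 'I_n.-1 -> nat) : {mpoly K[n]} -> Prop :=
  fun p => exists (k : nat) (ms : 'I_k -> 'X_{1..n}) (cs : 'I_k -> K),
    (forall j, has_weight xi (ms j) w) /\ p = \sum_(j < k) cs j *: 'X_[ms j].

Definition dimK (K : fieldType) (n : nat) (V : {mpoly K[n]} -> Prop) (d : nat) : Prop :=
  exists b : 'I_d -> {mpoly K[n]},
    [/\ forall j, V (b j),
        forall cs : 'I_d -> K, \sum_(j < d) cs j *: b j = 0 -> forall j, cs j = 0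
      & forall p, V p -> exists cs : 'I_d -> K, p = \sum_(j < d) cs j *: b j].

Definition mcoprime (K : fieldType) (n : nat) (p q : {mpoly K[n]}) : Prop :=
  forall d : {mpoly K[n]}, (exists a, p = d * a) -> (exists b, q = d * b) ->
    exists e, d * e = 1.

From HB Require Import structures.
From mathcomp Require Import all_boot all_order all_algebra.
From mathcomp Require Import reals.
From mathcomp Require Import mpoly.
From mathcomp Require Import zify ring.
Set Implicit Arguments.
Unset Strict Implicit.
Unset Printing Implicit Defensive.

Import Order.TTheory GRing.Theory Num.Theory.
Local Open Scope ring_scope.

(* Since xi_1, ..., xi_(n-1) are independent and orthogonal to the primitive vector
   c, two exponents of the same weight differ by an integer multiple of c.  Hence
   the monomials of a given weight are the x^(b + s c) with b + s c >= 0, s ranging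
   over an integer interval, and the dimension of the graded piece is the length
   of that interval; it is finite because c, being parallel to a compact face, has
   coordinates of both signs.  Two coprime monomials of weight w have disjoint
   supports, which forces the interval for w to be [0, k] with base point
   a = k c^- (a multiple of the negative part of c).  For z in M with exponent
   alpha the interval is some [L, U] with L <= U + 1: this is what the defining
   condition of M gives on the nonnegative vectors orthogonal to c supported on
   one positive and one negative coordinate of c.  Adding a to alpha leaves the
   constraints from the positive coordinates of c unchanged and shifts the others
   by k, so the interval for w + z is [L, U + k]. *)

Lemma orthogonal_pos_has_pos (R : realDomainType) n (xi v : 'I_n -> R) :
  (forall i, 0 < xi i) -> \sum_(i < n) xi i * v i = 0 -> (exists i, v i != 0) ->
  exists i, 0 < v i.
Proof.
move=> xi_gt0 orth [i0 vi0_neq0].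
case: (boolP [exists i, 0 < v i]) => [/existsP //| /existsPn v_le0].
have term_ge0 i : 0 <= xi i * - v i.
  by rewrite mulr_ge0 ?(ltW (xi_gt0 i)) // oppr_ge0 leNgt v_le0.
have sum0 : \sum_(i < n) xi i * - v i = 0.
  by under eq_bigr do rewrite mulrN; rewrite sumrN orth oppr0.
have /eqP := psumr_eq0P (fun i _ => term_ge0 i) sum0 (i := i0) isT.
by rewrite mulf_eq0 gt_eqF //= oppr_eq0 (negbTE vi0_neq0).
Qed.

Lemma orthogonal_pos_sign_change (R : realDomainType) n (xi v : 'I_n -> R) :
  (forall i, 0 < xi i) -> \sum_(i < n) xi i * v i = 0 -> (exists i, v i != 0) ->
  (exists i, 0 < v i) /\ (exists j, v j < 0).
Proof.
move=> xi_gt0 orth [i0 vi0_neq0]; split; first by apply: orthogonal_pos_has_pos => //; exists i0.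
have orthN : \sum_(i < n) xi i * - v i = 0.
  by under eq_bigr do rewrite mulrN; rewrite sumrN orth oppr0.
have [|j] := orthogonal_pos_has_pos xi_gt0 orthN; first by exists i0; rewrite oppr_eq0.
by exists j; rewrite -oppr_gt0.
Qed.

Lemma compact_face_parallel_sign_change (R : realType) n
    (Delta E : ('I_n -> R) -> Prop) (c : 'I_n -> int) :
  compact_face Delta E -> parallel_to c E -> (exists i, 0 < c i) /\ (exists j, c j < 0).
Proof.
case=> xi [xi_gt0 faceE] [a [b [Ea Eb a_neq_b [t ba_tc]]]].
have [[Da min_a] [Db min_b]] := conj ((faceE a).1 Ea) ((faceE b).1 Eb).
have orth_tc : \sum_(i < n) xi i * (t * (c i)%:~R) = 0.
  have dot_ab : dotR xi a = dotR xi b by apply/eqP; rewrite eq_le min_a ?min_b.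
  transitivity (dotR xi b - dotR xi a); last by rewrite dot_ab subrr.
  by rewrite /dotR -sumrB; apply: eq_bigr => i _; rewrite -ba_tc mulrBr.
have tc_nz : exists i, t * (c i)%:~R != 0.
  case: (boolP [exists i, t * (c i)%:~R != 0]) => [/existsP // | /existsPn tc0].
  case: a_neq_b; apply: boolp.funext => i.
  by apply/eqP; rewrite eq_sym -subr_eq0 ba_tc; apply/negPn.
have [[i ci] [j cj]] := orthogonal_pos_sign_change xi_gt0 orth_tc tc_nz.
have [t_lt0 | t_gt0 | t0] := ltgtP t 0; last by move: ci; rewrite t0 mul0r ltxx.
- by split; [exists j; move: cj; rewrite nmulr_rlt0 // ltr0z
             | exists i; move: ci; rewrite nmulr_rgt0 // ltrz0].
- by split; [exists i; move: ci; rewrite pmulr_rgt0 // ltr0z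
             | exists j; move: cj; rewrite pmulr_rlt0 // ltrz0].
Qed.

Lemma int_vector_bezout n (c : 'I_n -> int) :
  exists g (u : 'I_n -> int), (forall i, (g %| c i)%Z) /\ \sum_(i < n) u i * c i = g.
Proof.
elim: n c => [|n IHn] c; first by exists 0, (fun _ => 0); split; [case | rewrite big_ord0].
have [g [u [g_dvd sum_u]]] := IHn (fun i => c (lift ord0 i)).
have [a [b bezout_ab]] := Bezoutz g (c ord0).
exists (gcdz g (c ord0)), (fun i => if unlift ord0 i is Some j then a * u j else b); split.
  move=> i; case: (unliftP ord0 i) => [j ->|->]; last exact: dvdz_gcdr.
  exact: dvdz_trans (dvdz_gcdl _ _) (g_dvd j).
rewrite big_ord_recl /= unlift_none -bezout_ab -sum_u mulr_sumr addrC; congr (_ + _).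
by apply: eq_bigr => j _; rewrite liftK mulrA.
Qed.

Lemma primitive_bezout n (c : 'I_n -> int) :
  primitive c -> exists u : 'I_n -> int, \sum_(i < n) u i * c i = 1.
Proof.
move=> prim_c; have [g [u [g_dvd sum_u]]] := int_vector_bezout c.
exists (fun i => g * u i); under eq_bigr do rewrite -mulrA.
by rewrite -mulr_sumr sum_u; have := prim_c g g_dvd; lia.
Qed.

Definition zweight n k (xi : 'I_k -> 'I_n -> nat) (g : 'I_n -> int) (i : 'I_k) : int :=
  \sum_(j < n) (xi i j)%:Z * g j.

Lemma zweightD n k (xi : 'I_k -> 'I_n -> nat) (g h : 'I_n -> int) i :
  zweight xi (fun j => g j + h j) i = zweight xi g i + zweight xi h i.
Proof. by rewrite /zweight -big_split; apply: eq_bigr => j _; rewrite mulrDr. Qed.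

Lemma has_weightE n (xi : 'I_n.-1 -> 'I_n -> nat) (m : 'X_{1..n}) (w : 'I_n.-1 -> nat) :
  has_weight xi m w <-> forall i, zweight xi (fun j => (m j)%:Z) i = (w i)%:Z.
Proof.
have weightE i : ((\sum_(j < n) xi i j * m j)%N)%:Z = zweight xi (fun j => (m j)%:Z) i.
  by rewrite raddf_sum; apply: eq_bigr => j _; rewrite /= PoszM.
by split=> m_w i; [rewrite -weightE m_w | apply/eqP; rewrite -eqz_nat weightE m_w].
Qed.

Lemma corank1_kernel_line (F : fieldType) m n (X : 'M[F]_(m, n)) (c v : 'rV[F]_n) :
  \rank X = n.-1 -> c != 0 -> c *m X^T = 0 -> v *m X^T = 0 -> exists r, v = r *: c.
Proof.
move=> rankX c_neq0 cX vX.
have n_gt0 : (0 < n)%N by case: n {X v rankX cX vX} c c_neq0 => // c; rewrite thinmx0 eqxx.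
have rank_ker : \rank (kermx X^T) = 1%N by rewrite mxrank_ker mxrank_tr rankX; lia.
have c_ker : (c <= kermx X^T)%MS by apply/sub_kermxP.
have ker_c : (kermx X^T <= c)%MS.
  by have := (mxrank_leqif_sup c_ker).2; rewrite rank_ker rank_rV c_neq0 eqxx.
have [D ->] := submxP (submx_trans (introT sub_kermxP vX) ker_c).
by rewrite [D]mx11_scalar mul_scalar_mx; eexists.
Qed.

Definition weight_mx (R : realType) n k (xi : 'I_k -> 'I_n -> nat) : 'M[R]_(k, n) :=
  \matrix_(i, j) (xi i j)%:R.

Lemma lin_indep_rank (R : realType) n k (xi : 'I_k -> 'I_n -> nat) :
  @lin_indep_family R n k xi -> \rank (weight_mx R xi) = k.
Proof.
move=> indep; apply/eqP; rewrite -/(row_free _) -kermx_eq0; apply/eqP/matrixP => i j.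
rewrite [RHS]mxE; apply: (indep (fun l => kermx (weight_mx R xi) i l) _ j) => l.
have /matrixP/(_ i l) := mulmx_ker (weight_mx R xi); rewrite [RHS]mxE mxE => ker0.
by rewrite -[RHS]ker0; apply: eq_bigr => l' _; rewrite [weight_mx R xi _ _]mxE.
Qed.

Lemma zweight_ker_mx (R : realType) n k (xi : 'I_k -> 'I_n -> nat) (v : 'I_n -> int) :
  (forall i, zweight xi v i = 0) -> (\row_j (v j)%:~R) *m (weight_mx R xi)^T = 0.
Proof.
move=> v_ker; apply/matrixP => a i; rewrite !mxE -[RHS](mulr0z 1) -(v_ker i) raddf_sum.
by apply: eq_bigr => j _; rewrite !mxE /= intrM mulrC.
Qed.

Lemma int_kernel_line (R : realType) n (xi : 'I_n.-1 -> 'I_n -> nat) (c u : 'I_n -> int) :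
  @lin_indep_family R n n.-1 xi -> (forall i, zweight xi c i = 0) ->
  \sum_(i < n) u i * c i = 1 ->
  forall g d : 'I_n -> int, (forall i, zweight xi g i = zweight xi d i) ->
  exists s, forall j, g j = d j + s * c j.
Proof.
move=> indep c_ker bezout_u g d same_weight.
have c_neq0 : \row_j (c j)%:~R != 0 :> 'rV[R]_n.
  apply: contra_eq_neq bezout_u => /matrixP c0; rewrite big1 // => i _.
  by have := c0 0 i; rewrite !mxE => /eqP; rewrite intr_eq0 => /eqP ->; rewrite mulr0.
have gd_ker : forall i, zweight xi (fun j => g j - d j) i = 0.
  move=> i; have := same_weight i; rewrite /zweight => same_i.
  by under eq_bigr do rewrite mulrBr; rewrite sumrB same_i subrr.
have [r gd_rc] := corank1_kernel_line (lin_indep_rank indep) c_neq0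
  (zweight_ker_mx R c_ker) (zweight_ker_mx R gd_ker).
have gdE j : (g j - d j)%:~R = r * (c j)%:~R :> R.
  by have /matrixP/(_ 0 j) := gd_rc; rewrite !mxE.
(* The real factor r is an integer: r = r * (u . c) = u . (g - d). *)
exists (\sum_(i < n) u i * (g i - d i)) => j.
suff /intr_inj : (g j - d j)%:~R = ((\sum_(i < n) u i * (g i - d i)) * c j)%:~R :> R by lia.
rewrite gdE intrM; congr (_ * _).
transitivity (r * (\sum_(i < n) u i * c i)%:~R); first by rewrite bezout_u mulr1.
by rewrite !raddf_sum /= mulr_sumr; apply: eq_bigr => i _; rewrite !intrM gdE mulrCA.
Qed.

Lemma Rw_mpolyXP (K : fieldType) n (xi : 'I_n.-1 -> 'I_n -> nat) w (m : 'X_{1..n}) :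
  @Rw K n xi w 'X_[m] <-> has_weight xi m w.
Proof.
split=> [[k [ms [cs [ms_w Xm]]]] | m_w]; last first.
  by exists 1%N, (fun=> m), (fun=> 1); split=> //; rewrite big_ord1 scale1r.
case: (pickP (fun l => ms l == m)) => [l /eqP <- // | ms_neq_m].
have := congr1 (mcoeff m) Xm; rewrite mcoeffX eqxx raddf_sum big1 => [/eqP | l _].
  by rewrite oner_eq0.
by rewrite /= mcoeffZ mcoeffX ms_neq_m mulr0.
Qed.

Lemma mpolyX_free (K : fieldType) n d (ms : 'I_d -> 'X_{1..n}) (cs : 'I_d -> K) :
  injective ms -> \sum_(j < d) cs j *: 'X_[ms j] = 0 -> forall j, cs j = 0.
Proof.
move=> ms_inj sum0 j; have := congr1 (mcoeff (ms j)) sum0.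
rewrite raddf_sum mcoeff0 (bigD1 j) //= big1 ?addr0 => [|l l_neq_j].
  by rewrite mcoeffZ mcoeffX eqxx mulr1.
by rewrite mcoeffZ mcoeffX (inj_eq ms_inj) (negbTE l_neq_j) mulr0.
Qed.

Lemma dimK_Rw_enum (K : fieldType) n (xi : 'I_n.-1 -> 'I_n -> nat) w d
    (ms : 'I_d -> 'X_{1..n}) :
  injective ms -> (forall m, has_weight xi m w <-> exists j, m = ms j) ->
  dimK (@Rw K n xi w) d.
Proof.
move=> ms_inj ms_enum; exists (fun j => 'X_[ms j]); split.
- by move=> j; apply/Rw_mpolyXP/ms_enum; exists j.
- by move=> cs; apply: mpolyX_free.
move=> p [k [ms' [cs [ms'_w ->]]]].
have /fin_all_exists [idx ms'E] : forall l, exists j, ms' l = ms j by move=> l; apply/ms_enum.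
exists (fun j => \sum_(l < k | idx l == j) cs l).
rewrite (partition_big idx predT) //=; apply: eq_bigr => j _.
by rewrite scaler_suml; apply: eq_bigr => l /eqP <-; rewrite ms'E.
Qed.

Lemma mcoprime_mpolyX_disjoint (K : fieldType) n (m1 m2 : 'X_{1..n}) :
  @mcoprime K n 'X_[m1] 'X_[m2] -> forall i, (m1 i == 0%N) || (m2 i == 0%N).
Proof.
move=> coprime12 i; apply/norP => -[m1i m2i].
have Xi_dvd (m : 'X_{1..n}) : m i != 0%N -> exists q, 'X_[m] = 'X_i * q :> {mpoly K[n]}.
  move=> mi; exists 'X_[m - U_(i)]; rewrite -mpolyXD; congr mpolyX; apply/mnmP => j.
  by rewrite mnmDE mnmBE mnm1E; case: eqP => [<-|_]; lia.
have [e Xi_e] := coprime12 'X_i (Xi_dvd _ m1i) (Xi_dvd _ m2i).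
have /eqP := congr1 (meval (fun=> 0)) Xi_e.
by rewrite mevalM mevalXU mul0r meval1 eq_sym oner_eq0.
Qed.

Lemma upward_closed_le (P : pred int) :
  (forall s, P s -> P (s + 1)) -> forall x y, x <= y -> P x -> P y.
Proof.
move=> P_succ x y x_le_y Px; have -> : y = x + `|y - x|%N%:Z by lia.
by elim: `|y - x|%N => [|k IHk]; [rewrite addr0 | rewrite -addn1 PoszD addrA P_succ].
Qed.

Lemma upward_closed_threshold (P : pred int) :
  (forall s, P s -> P (s + 1)) -> (exists a, P a) -> (exists b, ~~ P b) ->
  exists L, forall s, P s = (L <= s).
Proof.
move=> P_succ [a Pa] [b notPb].
have b_lt_a : b < a by rewrite ltNge; apply: contra notPb => /upward_closed_le; apply.
have Pba : P (b + `|a - b|%N%:Z) by have -> : b + `|a - b|%N%:Z = a by lia.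
have [k Pk k_min] := ex_minnP (ex_intro (fun k => P (b + k%:Z)) _ Pba).
exists (b + k%:Z) => s; apply/idP/idP => [Ps | L_le_s]; last exact: upward_closed_le P_succ _ _ L_le_s Pk.
rewrite leNgt; apply/negP => s_lt; have [s_le_b | b_lt_s] := lerP s b.
  by move: notPb; rewrite (upward_closed_le P_succ s_le_b Ps).
have := k_min `|s - b|%N; have -> : b + `|s - b|%N%:Z = s by lia.
by move=> /(_ Ps); lia.
Qed.

Definition pos_coords_ok n (c b : 'I_n -> int) (s : int) : bool :=
  [forall i, (0 < c i) ==> (0 <= b i + s * c i)].

Definition neg_coords_ok n (c b : 'I_n -> int) (s : int) : bool :=
  [forall i, (c i < 0) ==> (0 <= b i + s * c i)].

Lemma pos_coords_ok_threshold n (c b : 'I_n -> int) :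
  (exists i, 0 < c i) -> exists L, forall s, pos_coords_ok c b s = (L <= s).
Proof.
move=> [i0 ci0]; pose B := \sum_(i < n) `|b i|.
have b_le_B i : `|b i| <= B by rewrite /B (bigD1 i) //= lerDl sumr_ge0.
apply: upward_closed_threshold.
- move=> s /forallP ok; apply/forallP => i; apply/implyP => ci.
  by have := implyP (ok i) ci; nia.
- exists B; apply/forallP => i; apply/implyP => ci; have := b_le_B i; nia.
- exists (- B - 1); apply/negP => /forallP/(_ i0)/implyP/(_ ci0).
  by have := b_le_B i0; nia.
Qed.

Lemma neg_coords_ok_threshold n (c b : 'I_n -> int) :
  (exists j, c j < 0) -> exists U, forall s, neg_coords_ok c b s = (s <= U).
Proof.
move=> [j cj]; have [|L okL] := @pos_coords_ok_threshold n (fun i => - c i) b.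
  by exists j; rewrite oppr_gt0.
exists (- L) => s; rewrite lerNr -okL; apply: eq_forallb => i.
by rewrite oppr_gt0 mulrNN.
Qed.

Lemma line_interval n (c b : 'I_n -> int) L U :
  (forall s, pos_coords_ok c b s = (L <= s)) -> (forall s, neg_coords_ok c b s = (s <= U)) ->
  (forall i, c i = 0 -> 0 <= b i) ->
  forall s, (forall i, 0 <= b i + s * c i) <-> L <= s <= U.
Proof.
move=> posL negU zero_b s; rewrite -posL -negU; split=> [ok | /andP [/forallP pos /forallP neg] i].
  by apply/andP; split; apply/forallP => i; apply/implyP => _; apply: ok.
case: (ltgtP (c i) 0) => [ci | ci | ci]; [exact: implyP (neg i) ci | exact: implyP (pos i) ci |].
by rewrite ci mulr0 addr0 zero_b.
Qed.

Lemma negpart_line_interval n (c a : 'I_n -> int) (k : int) :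
  (exists i, 0 < c i) -> (exists j, c j < 0) -> (forall i, 0 <= a i) ->
  (forall i, 0 < c i -> a i = 0) -> (forall i, c i < 0 -> a i = - k * c i) ->
  forall s, (forall i, 0 <= a i + s * c i) <-> 0 <= s <= k.
Proof.
move=> [i ci] [j cj] a_ge0 a_pos a_neg s; split=> [ok | s_0k l].
  by have := ok i; have := ok j; rewrite (a_pos i ci) (a_neg j cj); nia.
case: (ltgtP (c l) 0) => [cl | cl | ->]; last by rewrite mulr0 addr0.
- by rewrite a_neg //; nia.
- by rewrite a_pos //; nia.
Qed.

Lemma add_negpart_line_interval n (c b a : 'I_n -> int) (k L U : int) :
  (forall s, pos_coords_ok c b s = (L <= s)) -> (forall s, neg_coords_ok c b s = (s <= U)) ->
  (forall i, c i = 0 -> 0 <= b i) -> (forall i, 0 <= a i) ->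
  (forall i, 0 < c i -> a i = 0) -> (forall i, c i < 0 -> a i = - k * c i) ->
  forall s, (forall i, 0 <= b i + a i + s * c i) <-> L <= s <= U + k.
Proof.
move=> posL negU zero_b a_ge0 a_pos a_neg.
apply: (@line_interval n c (fun i => b i + a i)) => [s | s | i ci].
- rewrite -posL; apply: eq_forallb => i.
  by case: (boolP (0 < c i)) => //= ci; rewrite a_pos // addr0.
- rewrite -lerBlDr -negU; apply: eq_forallb => i.
  by case: (boolP (c i < 0)) => //= ci; rewrite a_neg //; congr (_ <= _); ring.
- by rewrite addr_ge0 ?zero_b.
Qed.

Definition nonneg_on_orthant_perp (R : realType) n (c b : 'I_n -> int) : Prop :=
  forall v : 'I_n -> R, (forall i, 0 <= v i) ->
    \sum_(j < n) v j * (c j)%:~R = 0 -> 0 <= \sum_(j < n) v j * (b j)%:~R.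

Lemma sum_delta (R : pzRingType) n (i : 'I_n) (x : R) (y : 'I_n -> R) :
  \sum_(l < n) (if l == i then x else 0) * y l = x * y i.
Proof. by rewrite (bigD1 i) //= eqxx big1 ?addr0 // => l /negbTE ->; rewrite mul0r. Qed.

Lemma orthant_perp_coord_ge0 (R : realType) n (c b : 'I_n -> int) :
  nonneg_on_orthant_perp R c b -> forall i, c i = 0 -> 0 <= b i.
Proof.
move=> b_ge0 i ci; have := b_ge0 (fun l => if l == i then 1 else 0).
rewrite !sum_delta ci !mul1r ler0z; apply=> // l; by case: ifP.
Qed.

Lemma orthant_perp_sign_change (R : realType) n (c b : 'I_n -> int) (s : int) i j :
  nonneg_on_orthant_perp R c b -> 0 < c i -> c j < 0 ->
  b i + s * c i < 0 -> 0 < b j + s * c j.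
Proof.
move=> b_ge0 ci cj bi_lt0.
have i_neq_j : i != j by apply: contraTneq ci => ->; rewrite -leNgt ltW.
pose v l : R := (if l == i then (- c j)%:~R else 0) + (if l == j then (c i)%:~R else 0).
have sum_v y : \sum_(l < n) v l * y l = (- c j)%:~R * y i + (c i)%:~R * y j.
  by rewrite -!sum_delta -big_split /=; apply: eq_bigr => l _; rewrite mulrDl.
suff : 0 <= - c j * b i + c i * b j by nia.
rewrite -(ler0z R) intrD !intrM -(sum_v (fun l => (b l)%:~R)); apply: b_ge0.
- move=> l; rewrite /v; case: (l =P i) => [-> | _]; first by rewrite (negbTE i_neq_j) addr0 ler0z; lia.
  by case: (l =P j) => _; rewrite ?add0r ?addr0 ?ler0z //; lia.
- by rewrite sum_v -!intrM -intrD (_ : _ + _ = 0) //; ring.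
Qed.

Lemma orthant_perp_line_interval (R : realType) n (c b : 'I_n -> int) :
  (exists i, 0 < c i) -> (exists j, c j < 0) -> nonneg_on_orthant_perp R c b ->
  exists L U, [/\ L <= U + 1, forall s, pos_coords_ok c b s = (L <= s),
                  forall s, neg_coords_ok c b s = (s <= U) & forall i, c i = 0 -> 0 <= b i].
Proof.
move=> cpos cneg b_ge0.
have [L posL] := pos_coords_ok_threshold b cpos.
have [U negU] := neg_coords_ok_threshold b cneg.
exists L, U; split => //; last exact: orthant_perp_coord_ge0 b_ge0.
have /negbT/forallPn [i] : pos_coords_ok c b (L - 1) = false by rewrite posL; lia.
rewrite negb_imply -ltNge => /andP [ci bi_lt0].
suff : neg_coords_ok c b (L - 1) by rewrite negU; lia.
apply/forallP => j; apply/implyP => cj.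
exact/ltW/(orthant_perp_sign_change b_ge0 ci cj bi_lt0).
Qed.

Lemma disjoint_line_pair n (c : 'I_n -> int) (m1 m2 : 'X_{1..n}) (t : int) :
  (forall j, (m2 j)%:Z = (m1 j)%:Z + t * c j) -> 0 < t ->
  (forall i, (m1 i == 0%N) || (m2 i == 0%N)) ->
  (forall i, 0 < c i -> m1 i = 0%N) /\ (forall i, c i < 0 -> (m1 i)%:Z = - t * c i).
Proof.
by move=> m2E t_gt0 disj; split=> i ci; have := m2E i; case/orP: (disj i) => /eqP mi; nia.
Qed.

Section WeightFibres.

Variables (n : nat) (xi : 'I_n.-1 -> 'I_n -> nat) (c : 'I_n -> int).
Hypothesis c_ker : forall i, zweight xi c i = 0.
Hypothesis fibre_line : forall g d : 'I_n -> int,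
  (forall i, zweight xi g i = zweight xi d i) -> exists s, forall j, g j = d j + s * c j.

Lemma zweight_line (b : 'I_n -> int) s i :
  zweight xi (fun j => b j + s * c j) i = zweight xi b i.
Proof.
rewrite zweightD -[RHS]addr0 -(mulr0 s) -(c_ker i); congr (_ + _).
by rewrite /zweight mulr_sumr; apply: eq_bigr => j _; rewrite mulrCA.
Qed.

Lemma dimK_Rw_line (K : fieldType) w (b : 'I_n -> int) (L U : int) :
  (exists i, c i != 0) -> (forall i, zweight xi b i = (w i)%:Z) ->
  (forall s, (forall i, 0 <= b i + s * c i) <-> L <= s <= U) -> L <= U + 1 ->
  dimK (@Rw K n xi w) `|(U - L + 1)%R|%N.
Proof.
move=> [i0 ci0] b_w line_LU LU.
pose mon (s : int) : 'X_{1..n} := [multinom `|(b i + s * c i)%R|%N | i < n].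
have monE s : L <= s <= U -> forall i, (mon s i)%:Z = b i + s * c i.
  by move=> s_LU i; rewrite mnmE gez0_abs // (line_LU s).2.
have idx_LU (j : 'I_`|(U - L + 1)%R|%N) : L <= L + j%:Z <= U by have := ltn_ord j; lia.
apply: (@dimK_Rw_enum K n xi w _ (fun j => mon (L + j%:Z))).
  move=> j j' /mnmP/(_ i0)/(congr1 Posz); rewrite !monE // => same_i0.
  have /eqP : (j%:Z - j'%:Z) * c i0 = 0 by move: same_i0; lia.
  by rewrite mulf_eq0 (negbTE ci0) orbF subr_eq0 => /eqP [] /val_inj.
move=> m; split=> [/has_weightE m_w | [j ->]].
  have [s m_line] := fibre_line (g := fun j => (m j)%:Z) (d := b)
    (fun i => etrans (m_w i) (esym (b_w i))).
  have s_LU : L <= s <= U by apply/line_LU => i; rewrite -m_line.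
  have j_lt : (`|s - L|%N < `|(U - L + 1)%R|%N)%N by lia.
  exists (Ordinal j_lt); apply/mnmP => i; apply/eqP; rewrite -eqz_nat monE //=; last by lia.
  by rewrite m_line; apply/eqP; congr (_ + _ * _); lia.
apply/has_weightE => i; rewrite -b_w -(zweight_line b (L + j%:Z)).
by apply: eq_bigr => l _; rewrite monE.
Qed.

Lemma coprime_weight_pair_negpart (K : fieldType) w (m1 m2 : 'X_{1..n}) :
  m1 != m2 -> @Rw K n xi w 'X_[m1] -> @Rw K n xi w 'X_[m2] -> @mcoprime K n 'X_[m1] 'X_[m2] ->
  exists (a : 'X_{1..n}) (k : int),
    [/\ forall i, zweight xi (fun j => (a j)%:Z) i = (w i)%:Z, 0 < k, forall i, 0 < c i -> a i = 0%N
      & forall i, c i < 0 -> (a i)%:Z = - k * c i].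
Proof.
move=> m12 /Rw_mpolyXP/has_weightE m1_w /Rw_mpolyXP/has_weightE m2_w.
move=> /mcoprime_mpolyX_disjoint disj.
have [t m2E] := fibre_line (g := fun j => (m2 j)%:Z) (d := fun j => (m1 j)%:Z)
  (fun i => etrans (m2_w i) (esym (m1_w i))).
have [t_lt0 | t_gt0 | t0] := ltgtP t 0.
- have m1E j : (m1 j)%:Z = (m2 j)%:Z + (- t) * c j by rewrite m2E; ring.
  have disj21 i : (m2 i == 0%N) || (m1 i == 0%N) by rewrite orbC.
  have [|m2_pos m2_neg] := disjoint_line_pair m1E _ disj21; first by rewrite oppr_gt0.
  by exists m2, (- t); split; rewrite ?oppr_gt0.
- by exists m1, t; have [] := disjoint_line_pair m2E t_gt0 disj.
- case/eqP: m12; apply/mnmP => j; apply/eqP; by rewrite -eqz_nat m2E t0 mul0r addr0.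
Qed.

End WeightFibres.

Theorem lemma2p4 (R : realType) (K : fieldType) (n : nat)
  (Delta E : ('I_n -> R) -> Prop) (c : 'I_n -> int)
  (xi : 'I_n.-1 -> 'I_n -> nat) (w z : 'I_n.-1 -> nat) :
  is_newton_polyhedron Delta ->
  loose_edge Delta E ->
  primitive c ->
  parallel_to c E ->
  @lin_indep_family R n n.-1 xi ->
  (forall i, \sum_(j < n) (xi i j)%:Z * c j = 0) ->
  @in_M R n xi c z ->
  (exists m1 m2 : 'X_{1..n}, [/\ m1 != m2, @Rw K n xi w 'X_[m1], @Rw K n xi w 'X_[m2]
                                & @mcoprime K n 'X_[m1] 'X_[m2]]) ->
  exists d1 d2 d3 : nat,
    [/\ dimK (@Rw K n xi w) d1, dimK (@Rw K n xi z) d2,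
        dimK (@Rw K n xi (fun i => (w i + z i)%N)) d3
      & d3 = (d1 + d2 - 1)%N].
Proof.
move=> _ [E_face _ _] prim_c par_c indep c_ker [al [al_z al_perp]].
move=> [m1 [m2 [m12 m1_w m2_w coprime12]]].
have [cpos cneg] := compact_face_parallel_sign_change E_face par_c.
have c_nz : exists i, c i != 0 by case: cpos => i ci; exists i; rewrite gt_eqF.
have [u bezout_u] := primitive_bezout prim_c.
have fibre_line := int_kernel_line indep c_ker bezout_u.
have dimK_line := @dimK_Rw_line n xi c c_ker fibre_line K.
have [a [k [a_w k_gt0 a_pos a_neg]]] :=
  coprime_weight_pair_negpart fibre_line m12 m1_w m2_w coprime12.
have [L [U [LU al_L al_U al_zero]]] := orthant_perp_line_interval cpos cneg al_perp.
have a_ge0 i : 0 <= (a i)%:Z by [].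
have a_pos' i : 0 < c i -> (a i)%:Z = 0 by move/a_pos ->.
have al_a_w i : zweight xi (fun j => al j + (a j)%:Z) i = (w i + z i)%N%:Z.
  by rewrite zweightD a_w /zweight al_z PoszD addrC.
exists `|(k - 0 + 1)%R|%N, `|(U - L + 1)%R|%N, `|(U + k - L + 1)%R|%N; split.
- by apply: dimK_line c_nz a_w (negpart_line_interval cpos cneg a_ge0 a_pos' a_neg) _; lia.
- exact: dimK_line c_nz al_z (line_interval al_L al_U al_zero) LU.
- apply: dimK_line c_nz al_a_w (add_negpart_line_interval al_L al_U al_zero a_ge0 a_pos' a_neg) _.
  by rewrite addrAC; lia.
- lia.
Qed.
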